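(* Let $\mathcal{G}$ be a Garside groupoid and $x$ an object of $\mathcal{G}$. Let $C_1,C_2,C_3$ be pairwise intersecting cells in $\mathcal{G}_{x\to}$. Then there is a cell $C\subseteq\mathcal{G}_{x\to}$ containing $(C_1\cap C_2)\cup(C_2\cap C_3)\cup(C_3\cap C_1)$.
   Context: Arrows compose like paths. A Garside category is a small category $\mathcal{C}$ with an automorphism $\phi$ and a natural transformation $\Delta$ from the identity functor to $\phi$ (components $\Delta_y\colon y\to\phi(y)$) such that $\mathcal{C}$ is cancellative and homogeneous (admits an additive length function vanishing exactly on identities), every atom (non-identity morphism not a product of two non-identity ones) is simple ($f\colon y\to z$ is simple if $ff^*=\Delta_y$ for some $f^*\colon z\to\phi(y)$), and for each object the morphisms with that source (resp. target) form a lattice under $\preccurlyeq$ (resp. $\succcurlyeq$). The Garside groupoid $\mathcal{G}$ is the enveloping groupoid of $\mathcal{C}$; $\phi,\Delta$ extend to $\mathcal{G}$. For morphisms $f,g$ of $\mathcal{G}$, $f\preccurlyeq g$ means $g=fz$ with $z$ a morphism of $\mathcal{C}$. $\mathcal{G}_{x\to}$ is the set of morphisms of $\mathcal{G}$ with source $x$; it is a lattice under $\preccurlyeq$. A cell in $\mathcal{G}_{x\to}$ is an interval $[f,f\Delta_{t(f)}]=\{g: f\preccurlyeq g\preccurlyeq f\Delta_{t(f)}\}$, where $t(f)$ is the target of $f$. *)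

(* Plain Rocq (no library needed). Garside categories / groupoids.
   Conventions: arrows compose like paths, [comp f g] = "f then g"
   (defined when tgt f = src g; junk otherwise). *)

Record Groupoid : Type := {
  Obj : Type;
  Mor : Type;
  src : Mor -> Obj;
  tgt : Mor -> Obj;
  idm : Obj -> Mor;
  comp : Mor -> Mor -> Mor;
  inv : Mor -> Mor;
  src_idm : forall y, src (idm y) = y;
  tgt_idm : forall y, tgt (idm y) = y;
  src_comp : forall f g, tgt f = src g -> src (comp f g) = src f;
  tgt_comp : forall f g, tgt f = src g -> tgt (comp f g) = tgt g;
  comp_idl : forall f, comp (idm (src f)) f = f;
  comp_idr : forall f, comp f (idm (tgt f)) = f;
  compA : forall f g h, tgt f = src g -> tgt g = src h ->
            comp f (comp g h) = comp (comp f g) h;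
  src_inv : forall f, src (inv f) = tgt f;
  tgt_inv : forall f, tgt (inv f) = src f;
  comp_inv_r : forall f, comp f (inv f) = idm (src f);
  comp_inv_l : forall f, comp (inv f) f = idm (tgt f)
}.

Arguments src {_} f.
Arguments tgt {_} f.
Arguments idm {_} y.
Arguments comp {_} f g.
Arguments inv {_} f.

Definition is_functor (G H : Groupoid) (Fo : Obj G -> Obj H) (Fm : Mor G -> Mor H)
  : Prop :=
  (forall f, src (Fm f) = Fo (src f)) /\
  (forall f, tgt (Fm f) = Fo (tgt f)) /\
  (forall y, Fm (idm y) = idm (Fo y)) /\
  (forall f g, tgt f = src g -> Fm (comp f g) = comp (Fm f) (Fm g)).

Definition is_functor_on (G H : Groupoid) (pos : Mor G -> Prop)
  (Fo : Obj G -> Obj H) (Fm : Mor G -> Mor H) : Prop :=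
  (forall f, pos f -> src (Fm f) = Fo (src f)) /\
  (forall f, pos f -> tgt (Fm f) = Fo (tgt f)) /\
  (forall y, Fm (idm y) = idm (Fo y)) /\
  (forall f g, pos f -> pos g -> tgt f = src g ->
      Fm (comp f g) = comp (Fm f) (Fm g)).

Definition enveloping (G : Groupoid) (pos : Mor G -> Prop) : Prop :=
  forall (H : Groupoid) (Fo : Obj G -> Obj H) (Fm : Mor G -> Mor H),
    is_functor_on G H pos Fo Fm ->
    (exists Gm : Mor G -> Mor H,
        is_functor G H Fo Gm /\ forall f, pos f -> Gm f = Fm f) /\
    (forall Gm1 Gm2 : Mor G -> Mor H,
        is_functor G H Fo Gm1 -> is_functor G H Fo Gm2 ->
        (forall f, pos f -> Gm1 f = Fm f) ->
        (forall f, pos f -> Gm2 f = Fm f) ->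
        forall f, Gm1 f = Gm2 f).

Definition bij {A B : Type} (h : A -> B) : Prop :=
  exists k : B -> A, (forall a, k (h a) = a) /\ (forall b, h (k b) = b).

Section Garside.
Variable G : Groupoid.
Variable pos : Mor G -> Prop.   (* the morphisms of the Garside category C *)

Definition ldiv (f g : Mor G) : Prop :=
  exists z, pos z /\ tgt f = src z /\ g = comp f z.

Definition rdiv_ge (f g : Mor G) : Prop :=
  exists z, pos z /\ tgt z = src g /\ f = comp z g.

Definition atom (f : Mor G) : Prop :=
  pos f /\ f <> idm (src f) /\
  ~ (exists g h, pos g /\ pos h /\ g <> idm (src g) /\ h <> idm (src h) /\
        tgt g = src h /\ f = comp g h).

Definition simple (phio : Obj G -> Obj G) (Delta : Obj G -> Mor G)
  (f : Mor G) : Prop :=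
  pos f /\ exists fs, pos fs /\ src fs = tgt f /\ tgt fs = phio (src f) /\
    comp f fs = Delta (src f).

End Garside.

Definition is_lattice {T : Type} (A : T -> Prop) (le : T -> T -> Prop) : Prop :=
  (forall a, A a -> le a a) /\
  (forall a b c, A a -> A b -> A c -> le a b -> le b c -> le a c) /\
  (forall a b, A a -> A b -> le a b -> le b a -> a = b) /\
  (forall a b, A a -> A b ->
     (exists m, A m /\ le m a /\ le m b /\
        forall c, A c -> le c a -> le c b -> le c m) /\
     (exists j, A j /\ le a j /\ le b j /\
        forall c, A c -> le a c -> le b c -> le j c)).

Definition IsGarsideGroupoid (G : Groupoid) (pos : Mor G -> Prop)
  (phio : Obj G -> Obj G) (phim : Mor G -> Mor G) (Delta : Obj G -> Mor G)
  : Prop :=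
  (forall y, pos (idm y)) /\
  (forall f g, pos f -> pos g -> tgt f = src g -> pos (comp f g)) /\
  enveloping G pos /\
  is_functor G G phio phim /\ bij phio /\ bij phim /\
  (forall f, pos f <-> pos (phim f)) /\
  (forall y, src (Delta y) = y /\ tgt (Delta y) = phio y /\ pos (Delta y)) /\
  (forall f, pos f -> comp f (Delta (tgt f)) = comp (Delta (src f)) (phim f)) /\
  (forall f g h, pos f -> pos g -> pos h -> tgt f = src g -> tgt f = src h ->
      comp f g = comp f h -> g = h) /\
  (forall f g h, pos f -> pos g -> pos h -> tgt g = src f -> tgt h = src f ->
      comp g f = comp h f -> g = h) /\
  (exists lam : Mor G -> nat,
      (forall f g, pos f -> pos g -> tgt f = src g ->
         lam (comp f g) = lam f + lam g) /\
      (forall f, pos f -> (lam f = 0 <-> f = idm (src f)))) /\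
  (forall f, atom G pos f -> simple G pos phio Delta f) /\
  (forall y, is_lattice (fun f => pos f /\ src f = y) (ldiv G pos)) /\
  (forall y, is_lattice (fun f => pos f /\ tgt f = y) (rdiv_ge G pos)).

Definition cell (G : Groupoid) (pos : Mor G -> Prop) (Delta : Obj G -> Mor G)
  (f : Mor G) : Mor G -> Prop :=
  fun g => ldiv G pos f g /\ ldiv G pos g (comp f (Delta (tgt f))).

From Stdlib Require Import Setoid.

(* Since f1 ≼ f Δ forces f1 Δ_z^-1 ≼ f (where φ(z) = t(f1)), the element
   h := f1 Δ_z^-1 left-divides f1, f2 and f3, so f_i = h p_i with every p_i
   in C_{y→}, y = t(h), and left translation by h maps cells to cells.  In the
   lattice C_{y→} take u := (p1 ∧ p2) ∨ (p2 ∧ p3) ∨ (p3 ∧ p1).  If q lies in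
   the cells of p_i and p_j, then p_i, p_j ≼ q and each of the three meets is
   below p_i or p_j, so u ≼ q; and q ≼ p_i Δ ∧ p_j Δ = (p_i ∧ p_j) Δ ≼ u Δ, because a ↦ a Δ = Δ φ(a)
   preserves meets.  Hence all pairwise intersections lie in the cell of h u. *)

Ltac solve_endpoints := autorewrite with endpoints; congruence.
#[local] Hint Rewrite src_inv tgt_inv src_idm tgt_idm : endpoints.
#[local] Hint Rewrite src_comp tgt_comp using solve_endpoints : endpoints.

Section GroupoidCalculus.
Variable G : Groupoid.
Implicit Types a b c : Mor G.

Lemma compKg a b : src b = tgt a -> comp (inv a) (comp a b) = b.
Proof.
  intro E. rewrite compA by solve_endpoints. rewrite comp_inv_l, <- E. apply comp_idl.
Qed.

Lemma compKVg a b : src b = src a -> comp a (comp (inv a) b) = b.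
Proof.
  intro E. rewrite compA by solve_endpoints. rewrite comp_inv_r, <- E. apply comp_idl.
Qed.

Lemma compgKV a b : tgt a = tgt b -> comp (comp a (inv b)) b = a.
Proof.
  intro E. rewrite <- compA by solve_endpoints. rewrite comp_inv_l, <- E. apply comp_idr.
Qed.

Lemma comp_inj_l a b c : src b = tgt a -> src c = tgt a -> comp a b = comp a c -> b = c.
Proof.
  intros Eb Ec E. rewrite <- (compKg a b), E by exact Eb. apply compKg, Ec.
Qed.

End GroupoidCalculus.

Lemma bij_inj {A B : Type} (h : A -> B) : bij h -> forall a b, h a = h b -> a = b.
Proof. intros [k [hK _]] a b E. rewrite <- (hK a), <- (hK b), E. reflexivity. Qed.

Lemma bij_surj {A B : Type} (h : A -> B) : bij h -> forall b, exists a, h a = b.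
Proof. intros [k [_ kK]] b. exists (k b). apply kK. Qed.

Section Divisibility.
Variables (G : Groupoid) (pos : Mor G -> Prop).
Hypothesis pos_comp : forall f g, pos f -> pos g -> tgt f = src g -> pos (comp f g).

Local Notation "f ≼ g" := (ldiv G pos f g) (at level 70).

Definition pos_from (y : Obj G) (f : Mor G) : Prop := pos f /\ src f = y.

Definition meet_in (A : Mor G -> Prop) (a b m : Mor G) : Prop :=
  A m /\ m ≼ a /\ m ≼ b /\ forall c, A c -> c ≼ a -> c ≼ b -> c ≼ m.

Definition join_in (A : Mor G -> Prop) (a b j : Mor G) : Prop :=
  A j /\ a ≼ j /\ b ≼ j /\ forall c, A c -> a ≼ c -> b ≼ c -> j ≼ c.

Lemma ldiv_src a b : a ≼ b -> src b = src a.
Proof. intros (z & _ & Ez & ->). solve_endpoints. Qed.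

Lemma ldiv_pos a b : pos a -> a ≼ b -> pos b.
Proof. intros Pa (z & Pz & Ez & ->). auto. Qed.

Lemma ldiv_pos_from y a b : pos_from y a -> a ≼ b -> pos_from y b.
Proof.
  intros [Pa Sa] ab. split; [exact (ldiv_pos a b Pa ab)|].
  rewrite (ldiv_src a b ab). exact Sa.
Qed.

Lemma ldiv_trans a b c : a ≼ b -> b ≼ c -> a ≼ c.
Proof.
  intros (z & Pz & Ez & ->) (z' & Pz' & Ez' & ->).
  autorewrite with endpoints in Ez'.
  exists (comp z z'). split; [auto|split]; [solve_endpoints|].
  apply eq_sym, compA; assumption.
Qed.

Lemma ldiv_comp2l h a b : tgt h = src a -> tgt h = src b ->
  comp h a ≼ comp h b <-> a ≼ b.
Proof.
  intros Ea Eb. split.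
  - intros (z & Pz & Ez & E). exists z. autorewrite with endpoints in Ez.
    split; [exact Pz|split; [exact Ez|]].
    rewrite <- compA in E by congruence.
    apply (comp_inj_l G h); [solve_endpoints..|exact E].
  - intros (z & Pz & Ez & ->). exists z. split; [exact Pz|split; [solve_endpoints|]].
    apply compA; congruence.
Qed.

End Divisibility.

Section GarsideGroupoid.
Variables (G : Groupoid) (pos : Mor G -> Prop) (phio : Obj G -> Obj G)
  (phim : Mor G -> Mor G) (Delta : Obj G -> Mor G).
Hypothesis HG : IsGarsideGroupoid G pos phio phim Delta.

Local Notation "f ≼ g" := (ldiv G pos f g) (at level 70).
Local Notation "f ·Δ" := (comp f (Delta (tgt f))) (at level 2, format "f ·Δ").
Local Notation pos_from := (pos_from G pos).

Lemma pos_comp f g : pos f -> pos g -> tgt f = src g -> pos (comp f g).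
Proof. destruct HG as (_ & Hcomp & _). exact (Hcomp f g). Qed.

Lemma phim_functor : is_functor G G phio phim.
Proof. destruct HG as (_ & _ & _ & Hphi & _). exact Hphi. Qed.

Lemma phim_src f : src (phim f) = phio (src f).
Proof. apply phim_functor. Qed.

Lemma phim_tgt f : tgt (phim f) = phio (tgt f).
Proof. apply phim_functor. Qed.

Lemma phim_comp f g : tgt f = src g -> phim (comp f g) = comp (phim f) (phim g).
Proof. apply phim_functor. Qed.

Lemma phio_bij : bij phio.
Proof. destruct HG as (_ & _ & _ & _ & Hphio & _). exact Hphio. Qed.

Lemma phim_bij : bij phim.
Proof. destruct HG as (_ & _ & _ & _ & _ & Hphim & _). exact Hphim. Qed.

Lemma pos_phim f : pos (phim f) <-> pos f.
Proof. destruct HG as (_ & _ & _ & _ & _ & _ & Hpos & _). split; apply Hpos. Qed.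

Lemma Delta_src y : src (Delta y) = y.
Proof. destruct HG as (_ & _ & _ & _ & _ & _ & _ & HD & _). apply HD. Qed.

Lemma Delta_tgt y : tgt (Delta y) = phio y.
Proof. destruct HG as (_ & _ & _ & _ & _ & _ & _ & HD & _). apply HD. Qed.

Lemma Delta_pos y : pos (Delta y).
Proof. destruct HG as (_ & _ & _ & _ & _ & _ & _ & HD & _). apply HD. Qed.

#[local] Hint Rewrite phim_src phim_tgt Delta_src Delta_tgt : endpoints.

(* Conjugation by Δ is a functor on G agreeing with φ on C, hence equal to φ
   by the uniqueness part of the enveloping property. *)
Lemma Delta_natural f : f·Δ = comp (Delta (src f)) (phim f).
Proof.
  destruct HG as (_ & _ & Henv & _ & _ & _ & _ & _ & Hnat & _).
  set (conj_Delta := fun f => comp (inv (Delta (src f))) f·Δ).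
  assert (conj_functor : is_functor G G phio conj_Delta).
  { unfold conj_Delta; split; [|split; [|split]].
    - intro g. solve_endpoints.
    - intro g. solve_endpoints.
    - intro y. pose proof (comp_idl G (Delta y)) as idl. rewrite Delta_src in idl.
      rewrite src_idm, tgt_idm, idl, comp_inv_l, Delta_tgt. reflexivity.
    - intros g g' E. autorewrite with endpoints.
      rewrite <- (compA _ (inv (Delta (src g)))) by solve_endpoints. f_equal.
      rewrite E, <- (compA _ g (Delta (src g'))) by solve_endpoints.
      rewrite compKVg by solve_endpoints. symmetry. apply compA; solve_endpoints. }
  assert (conj_pos : forall g, pos g -> phim g = conj_Delta g).
  { intros g Pg. unfold conj_Delta. rewrite Hnat by exact Pg.
    rewrite compKg by solve_endpoints. reflexivity. }
  destruct (Henv G phio conj_Delta) as [_ uniq].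
  { destruct conj_functor as (? & ? & ? & ?). repeat split; auto. }
  rewrite (uniq phim conj_Delta phim_functor conj_functor conj_pos (fun _ _ => eq_refl) f).
  unfold conj_Delta. rewrite compKVg by solve_endpoints. reflexivity.
Qed.

Lemma ldiv_phim a b : phim a ≼ phim b <-> a ≼ b.
Proof.
  split.
  - intros (t & Pt & Et & E).
    destruct (bij_surj phim phim_bij t) as [t' <-].
    exists t'. split; [apply pos_phim, Pt|].
    assert (Ea : tgt a = src t').
    { apply (bij_inj phio phio_bij). rewrite <- phim_tgt, <- phim_src. exact Et. }
    split; [exact Ea|].
    apply (bij_inj phim phim_bij). rewrite phim_comp by exact Ea. exact E.
  - intros (z & Pz & Ez & ->). exists (phim z).
    split; [apply pos_phim, Pz|split; [solve_endpoints|apply phim_comp, Ez]].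
Qed.

Lemma Delta_ldiv a : pos a -> Delta (src a) ≼ a·Δ.
Proof.
  intro Pa. rewrite Delta_natural. exists (phim a).
  split; [apply pos_phim, Pa|split; [solve_endpoints|reflexivity]].
Qed.

Lemma Delta_mono a b : a ≼ b -> a·Δ ≼ b·Δ.
Proof.
  intro ab. pose proof (ldiv_src G pos a b ab) as Eb.
  rewrite !Delta_natural, Eb.
  apply ldiv_comp2l; [solve_endpoints..|]. apply ldiv_phim, ab.
Qed.

Lemma meet_exists y a b : pos_from y a -> pos_from y b ->
  exists m, meet_in G pos (pos_from y) a b m.
Proof.
  destruct HG as (_ & _ & _ & _ & _ & _ & _ & _ & _ & _ & _ & _ & _ & Hlat & _).
  intros Ya Yb. destruct (Hlat y) as (_ & _ & _ & meet_join).
  exact (proj1 (meet_join a b Ya Yb)).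
Qed.

Lemma join_exists y a b : pos_from y a -> pos_from y b ->
  exists j, join_in G pos (pos_from y) a b j.
Proof.
  destruct HG as (_ & _ & _ & _ & _ & _ & _ & _ & _ & _ & _ & _ & _ & Hlat & _).
  intros Ya Yb. destruct (Hlat y) as (_ & _ & _ & meet_join).
  exact (proj2 (meet_join a b Ya Yb)).
Qed.

Lemma pos_from_Delta y a : pos_from y a -> pos_from y a·Δ.
Proof.
  intros [Pa Sa]. split; [apply pos_comp; [exact Pa|apply Delta_pos|solve_endpoints]|solve_endpoints].
Qed.

Lemma meet_Delta y a b m : meet_in G pos (pos_from y) a b m ->
  meet_in G pos (pos_from y) a·Δ b·Δ m·Δ.
Proof.
  intros (Ym & ma & mb & glb).
  pose proof (ldiv_pos_from G pos pos_comp y m a Ym ma) as Ya.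
  pose proof (ldiv_pos_from G pos pos_comp y m b Ym mb) as Yb.
  split; [apply pos_from_Delta, Ym|].
  split; [apply Delta_mono, ma|split; [apply Delta_mono, mb|]].
  intros c Yc ca cb.
  (* Δ_y divides a·Δ = Δ_y φ(a) and b·Δ, hence also their meet m', which is
     therefore Δ_y φ(v) for a common divisor v of a and b. *)
  destruct (meet_exists y a·Δ b·Δ) as (m' & _ & m'a & m'b & glb');
    [apply pos_from_Delta, Ya|apply pos_from_Delta, Yb|].
  apply (ldiv_trans G pos pos_comp _ m'); [apply glb'; assumption|].
  destruct (glb' (Delta y)) as (w & Pw & Ew & ->).
  { split; [apply Delta_pos|apply Delta_src]. }
  { destruct Ya as [Pa <-]. apply Delta_ldiv, Pa. }
  { destruct Yb as [Pb <-]. apply Delta_ldiv, Pb. }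
  destruct (bij_surj phim phim_bij w) as [v <-].
  assert (Yv : pos_from y v).
  { split; [apply pos_phim, Pw|]. apply (bij_inj phio phio_bij).
    rewrite <- phim_src, <- Ew. apply Delta_tgt. }
  destruct Ya as [_ Sa], Yb as [_ Sb], Ym as [_ Sm], Yv as [_ Sv].
  rewrite Delta_natural, Sa in m'a. rewrite Delta_natural, Sb in m'b.
  rewrite Delta_natural, Sm.
  apply ldiv_comp2l in m'a; [|solve_endpoints..]. apply ldiv_comp2l in m'b; [|solve_endpoints..].
  apply ldiv_comp2l; [solve_endpoints..|]. apply ldiv_phim, glb.
  - split; [apply pos_phim, Pw|exact Sv].
  - apply ldiv_phim, m'a.
  - apply ldiv_phim, m'b.
Qed.

Lemma cell_comp2l h p q : tgt h = src p -> tgt h = src q ->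
  cell G pos Delta (comp h p) (comp h q) <-> cell G pos Delta p q.
Proof.
  intros Ep Eq. unfold cell. rewrite tgt_comp by exact Ep.
  rewrite <- compA by solve_endpoints.
  rewrite !ldiv_comp2l by solve_endpoints. reflexivity.
Qed.

Lemma cell_inter_sub y a b m u q : meet_in G pos (pos_from y) a b m ->
  m ≼ u -> u ≼ q -> cell G pos Delta a q -> cell G pos Delta b q ->
  cell G pos Delta u q.
Proof.
  intros mab mu uq [aq qa] [_ qb]. split; [exact uq|].
  pose proof (meet_Delta y a b m mab) as (_ & _ & _ & glbD).
  destruct mab as (Ym & ma & _).
  pose proof (ldiv_pos_from G pos pos_comp y a q
    (ldiv_pos_from G pos pos_comp y m a Ym ma) aq) as Yq.
  apply (ldiv_trans G pos pos_comp _ m·Δ); [apply glbD; assumption|].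
  apply Delta_mono, mu.
Qed.

Lemma comp_invDelta_ldiv z f1 f : phio z = tgt f1 -> src f = src f1 ->
  f1 ≼ f·Δ -> comp f1 (inv (Delta z)) ≼ f.
Proof.
  intros Ez Sf (p & Pp & Ep & E).
  set (h := comp f1 (inv (Delta z))) in *.
  assert (hDelta : comp h (Delta z) = f1) by (apply compgKV; solve_endpoints).
  assert (Sh : src h = src f1) by (unfold h; solve_endpoints).
  assert (Th : tgt h = z) by (unfold h; solve_endpoints).
  set (r := comp (inv h) f).
  assert (Ef : f = comp h r) by (symmetry; apply compKVg; congruence).
  assert (Sr : src r = z) by (unfold r; solve_endpoints).
  assert (Er : p = phim r).
  { apply (comp_inj_l G f1); [exact (eq_sym Ep)|solve_endpoints|].
    rewrite <- E, Ef, <- hDelta, tgt_comp, <- compA, Delta_natural, Sr by solve_endpoints.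
    apply compA; solve_endpoints. }
  exists r. split; [apply pos_phim; rewrite <- Er; exact Pp|].
  split; [solve_endpoints|exact Ef].
Qed.

Lemma common_ldiv_of_ldiv_Delta f1 :
  exists h, h ≼ f1 /\ forall f, src f = src f1 -> f1 ≼ f·Δ -> h ≼ f.
Proof.
  destruct (bij_surj phio phio_bij (tgt f1)) as [z Ez].
  exists (comp f1 (inv (Delta z))). split.
  - exists (Delta z). split; [apply Delta_pos|split; [solve_endpoints|]].
    symmetry. apply compgKV. solve_endpoints.
  - intros f Sf. apply comp_invDelta_ldiv; assumption.
Qed.

Lemma pos_cells_common_cell y p1 p2 p3 :
  pos_from y p1 -> pos_from y p2 -> pos_from y p3 ->
  exists u, pos_from y u /\ forall q,
    (cell G pos Delta p1 q /\ cell G pos Delta p2 q) \/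
    (cell G pos Delta p2 q /\ cell G pos Delta p3 q) \/
    (cell G pos Delta p3 q /\ cell G pos Delta p1 q) -> cell G pos Delta u q.
Proof.
  intros Y1 Y2 Y3.
  destruct (meet_exists y p1 p2 Y1 Y2) as [m12 M12].
  destruct (meet_exists y p2 p3 Y2 Y3) as [m23 M23].
  destruct (meet_exists y p3 p1 Y3 Y1) as [m31 M31].
  pose proof M12 as (Y12 & m12p1 & m12p2 & _).
  pose proof M23 as (Y23 & m23p2 & m23p3 & _).
  pose proof M31 as (Y31 & m31p3 & m31p1 & _).
  destruct (join_exists y m12 m23 Y12 Y23) as (j & Yj & m12j & m23j & lub_j).
  destruct (join_exists y j m31 Yj Y31) as (u & Yu & ju & m31u & lub_u).
  pose proof (ldiv_trans G pos pos_comp) as trans.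
  assert (lub : forall c, pos_from y c ->
    m12 ≼ c -> m23 ≼ c -> m31 ≼ c -> u ≼ c) by (intros; apply lub_u; auto).
  exists u. split; [exact Yu|].
  intros q [[C1 C2]|[[C2 C3]|[C3 C1]]].
  - pose proof (proj1 C1) as p1q. pose proof (proj1 C2) as p2q.
    apply (cell_inter_sub y p1 p2 m12 u q M12); eauto.
    apply lub; [exact (ldiv_pos_from G pos pos_comp y p1 q Y1 p1q)|eauto..].
  - pose proof (proj1 C2) as p2q. pose proof (proj1 C3) as p3q.
    apply (cell_inter_sub y p2 p3 m23 u q M23); eauto.
    apply lub; [exact (ldiv_pos_from G pos pos_comp y p2 q Y2 p2q)|eauto..].
  - pose proof (proj1 C3) as p3q. pose proof (proj1 C1) as p1q.
    apply (cell_inter_sub y p3 p1 m31 u q M31); eauto.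
    apply lub; [exact (ldiv_pos_from G pos pos_comp y p3 q Y3 p3q)|eauto..].
Qed.

End GarsideGroupoid.

Theorem lemma4p8 (G : Groupoid) (pos : Mor G -> Prop)
  (phio : Obj G -> Obj G) (phim : Mor G -> Mor G) (Delta : Obj G -> Mor G)
  (HG : IsGarsideGroupoid G pos phio phim Delta)
  (x : Obj G) (f1 f2 f3 : Mor G)
  (h1 : src f1 = x) (h2 : src f2 = x) (h3 : src f3 = x)
  (i12 : exists g, cell G pos Delta f1 g /\ cell G pos Delta f2 g)
  (i23 : exists g, cell G pos Delta f2 g /\ cell G pos Delta f3 g)
  (i31 : exists g, cell G pos Delta f3 g /\ cell G pos Delta f1 g) :
  exists f : Mor G, src f = x /\
    forall g : Mor G,
      (cell G pos Delta f1 g /\ cell G pos Delta f2 g) \/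
      (cell G pos Delta f2 g /\ cell G pos Delta f3 g) \/
      (cell G pos Delta f3 g /\ cell G pos Delta f1 g) ->
      cell G pos Delta f g.
Proof.
  pose proof (ldiv_trans G pos (pos_comp _ _ _ _ _ HG)) as trans.
  destruct (common_ldiv_of_ldiv_Delta _ _ _ _ _ HG f1) as (h & hf1 & below).
  destruct i12 as (g12 & [f1g12 _] & [_ g12f2]).
  destruct i31 as (g31 & [_ g31f3] & [f1g31 _]).
  destruct (below f2 ltac:(congruence) (trans _ _ _ f1g12 g12f2)) as (p2 & P2 & T2 & ->).
  destruct (below f3 ltac:(congruence) (trans _ _ _ f1g31 g31f3)) as (p3 & P3 & T3 & ->).
  destruct hf1 as (p1 & P1 & T1 & ->).
  destruct (pos_cells_common_cell _ _ _ _ _ HG (tgt h) p1 p2 p3) as (u & [_ Su] & common);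
    try (split; [assumption|symmetry; assumption]).
  exists (comp h u). split; [rewrite <- h1; solve_endpoints|].
  intros g Hg.
  assert (Sg : src g = src h).
  { destruct Hg as [[[hg _] _]|[[[hg _] _]|[[hg _] _]]];
      rewrite (ldiv_src G pos _ _ hg); solve_endpoints. }
  rewrite <- (compKVg G h g Sg) in Hg |- *.
  rewrite !(cell_comp2l _ _ _ _ _ HG) in Hg by solve_endpoints.
  apply (cell_comp2l _ _ _ _ _ HG); [solve_endpoints..|]. apply common, Hg.
Qed.
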